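(* Let $\mathcal{F}\subseteq\mathcal{P}(\omega)$ be compact, hereditary and covering $\omega$. Then $\lVert\cdot\rVert^{\mathcal{F}}\colon\mathbb{R}^\omega\to[0,\infty]$ is a nice quasi-norm; in particular it is lower semicontinuous: $\lim_{n\to\infty}\lVert P_n(x)\rVert^{\mathcal{F}}=\lVert x\rVert^{\mathcal{F}}$ for every $x\in\mathbb{R}^\omega$ (allowing the value $\infty$).
   Context: $\omega=\{1,2,3,\dots\}$. Subsets of $\omega$ are identified with elements of $2^\omega$ (product topology); $\mathcal{F}$ is compact if compact in $2^\omega$, hereditary if closed under taking subsets, and covers $\omega$ if $\bigcup\mathcal{F}=\omega$. A partition is a family $\mathcal{P}\subseteq\mathcal{P}(\omega)$ with $\emptyset\in\mathcal{P}$, $\bigcup\mathcal{P}=\omega$, elements pairwise disjoint; $\mathbb{P}_\mathcal{F}$ is the set of partitions contained in $\mathcal{F}$. For $x\in\mathbb{R}^\omega$, $\lVert x\rVert^{\mathcal{F}}=\inf_{\mathcal{P}\in\mathbb{P}_\mathcal{F}}\sum_{F\in\mathcal{P}}\sup_{k\in F}|x(k)|\in[0,\infty]$ (with $\sup_{k\in\emptyset}=0$). For $A\subseteq\omega$, $P_A(x)$ is the sequence equal to $x(k)$ for $k\in A$ and $0$ otherwise; $P_n=P_{\{1,\dots,n\}}$. A function $\varphi\colon\mathbb{R}^\omega\to[0,\infty]$ is nice if (i) $\varphi(x)<\infty$ for all finitely supported $x$; (ii) $|x(n)|\le|y(n)|$ for all $n$ implies $\varphi(x)\le\varphi(y)$;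 (iii) $\lim_n\varphi(P_n(x))=\varphi(x)$ for every $x$. A (possibly extended) quasi-norm satisfies $\lVert x\rVert=0\iff x=0$, $\lVert\lambda x\rVert=|\lambda|\lVert x\rVert$, and $\lVert x+y\rVert\le c(\lVert x\rVert+\lVert y\rVert)$ for some constant $c\ge1$. *)

From HB Require Import structures.
From mathcomp Require Import all_boot all_order all_algebra.
From mathcomp Require Import all_classical all_reals.
From mathcomp Require Import ereal topology normedtype sequences esum cantor.
Set Implicit Arguments. Unset Strict Implicit. Unset Printing Implicit Defensive.
Import Order.TTheory GRing.Theory Num.Theory.
Local Open Scope classical_set_scope.
Local Open Scope ring_scope.

(* omega = {1,2,3,...} is relabelled as nat = {0,1,2,...} via k |-> k-1. *)

Definition char_of (A : set nat) : cantor_space := fun k => `[< A k >].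

Definition fam_compact (F : set (set nat)) : Prop := compact (char_of @` F).
Definition fam_hereditary (F : set (set nat)) : Prop :=
  forall A B, F A -> B `<=` A -> F B.
Definition fam_covers (F : set (set nat)) : Prop := \bigcup_(A in F) A = setT.

Definition is_partition (P : set (set nat)) : Prop :=
  [/\ P set0, \bigcup_(A in P) A = setT &
      forall A B, P A -> P B -> A <> B -> A `&` B = set0].

Definition partitions_in (F : set (set nat)) : set (set (set nat)) :=
  [set P | is_partition P /\ P `<=` F].

(* sup_{k in A} |x(k)| in [0,oo], with sup over the empty set equal to 0
   (adding 0 to the set changes nothing since |x(k)| >= 0) *)
Definition supabs (R : realType) (x : nat -> R) (A : set nat) : \bar R :=
  ereal_sup ([set 0%E] `|` [set (`|x k|)%:E | k in A]).

Definition Fnorm (R : realType) (F : set (set nat)) (x : nat -> R) : \bar R :=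
  ereal_inf [set (\esum_(A in P) supabs x A)%E | P in partitions_in F].

(* P_A and P_n = P_{1..n} (i.e. indices 0..n-1 after relabelling) *)
Definition projA (R : realType) (A : set nat) (x : nat -> R) : nat -> R :=
  fun k => if `[< A k >] then x k else 0.
Definition projn (R : realType) (n : nat) (x : nat -> R) : nat -> R :=
  projA [set k | (k < n)%N] x.

Definition finitely_supported (R : realType) (x : nat -> R) : Prop :=
  finite_set [set k | x k != 0].

Definition nice (R : realType) (phi : (nat -> R) -> \bar R) : Prop :=
  [/\ (forall x, finitely_supported x -> (phi x < +oo)%E),
      (forall x y, (forall n, `|x n| <= `|y n|) -> (phi x <= phi y)%E) &
      (forall x, (fun n => phi (projn n x)) @ \oo --> phi x)].

Definition quasi_norm (R : realType) (phi : (nat -> R) -> \bar R) : Prop :=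
  [/\ (forall x, phi x = 0%E <-> x = (fun _ => 0)),
      (forall (l : R) (x : nat -> R), phi (fun k => l * x k) = (`|l|%:E * phi x)%E) &
      exists c : R, 1 <= c /\
        forall x y : nat -> R, (phi (fun k => (x k + y k)%R) <= c%:E * (phi x + phi y))%E].

From HB Require Import structures.
From mathcomp Require Import all_boot all_order all_algebra.
From mathcomp Require Import all_classical all_reals.
From mathcomp Require Import ereal topology normedtype sequences esum cantor.
Import Order.TTheory GRing.Theory Num.Theory.
Local Open Scope classical_set_scope.
Local Open Scope ring_scope.

Set Implicit Arguments. Unset Strict Implicit. Unset Printing Implicit Defensive.

(* - The cost of P is the supremum of sum_{k in ks} |x k| over finite lists ks
     of points lying in pairwise distinct blocks of P ("separated" lists).
   - Singletons belong to F, so the partition into singletons bounds the norm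
     by the l^1 norm: finitely supported vectors have finite norm; every
     coordinate is dominated by the norm, hence ||x|| = 0 only for x = 0.
   - Homogeneity is immediate, and mixing a partition used for x on
     {|y| <= |x|} with one used for y on its complement (F is hereditary)
     gives ||x + y|| <= 2 (||x|| + ||y||).
   - Lower semicontinuity uses compactness: near-optimal partitions Pn for
     the truncations projn n x have "same block" relations with a cluster
     point in 2^(nat * nat).  It is an equivalence relation whose classes lie
     in F (compact families are closed in 2^nat), and every separated list
     for the limit partition is separated for some late Pn, so its cost is at
     most sup_n ||projn n x||.  As the truncated norms are nondecreasing,
     they converge to ||x||. *)

Section EsumFacts.
Variables (R : realType) (T : choiceType).
Local Open Scope ereal_scope.
Implicit Types (f : T -> \bar R) (P Q : set T).

Lemma esum_subset P Q f : (forall i, 0 <= f i) -> P `<=` Q ->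
  \esum_(i in P) f i <= \esum_(i in Q) f i.
Proof.
move=> f0 PQ; apply: ge_ereal_sup => _ [X [finX XP] <-].
by apply: esum_ge; exists X => //; split => // i /XP /PQ.
Qed.

Lemma esum_setU_le P Q f : (forall i, 0 <= f i) ->
  \esum_(i in P `|` Q) f i <= \esum_(i in P) f i + \esum_(i in Q) f i.
Proof.
move=> f0; rewrite esum_mkcond (esum_mkcond P) (esum_mkcond Q) -esumD; last first.
- by move=> i _; case: ifP.
- by move=> i _; case: ifP.
apply: le_esum => i _; rewrite in_setU.
by case: (i \in P); case: (i \in Q) => /=; rewrite ?adde0 ?add0e ?leeDl.
Qed.

Lemma esum_setU1_0 a P f : f a = 0 ->
  \esum_(i in a |` P) f i = \esum_(i in P) f i.
Proof.
move=> fa; rewrite esum_mkcond (esum_mkcond P); apply: eq_esum => i _.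
rewrite in_setU in_set1; have [->|_] := eqVneq i a; last by [].
by rewrite fa; case: ifP.
Qed.

Lemma esum_pZl P f (r : R) : (0 < r)%R -> (forall i, 0 <= f i) ->
  \esum_(i in P) (r%:E * f i) = r%:E * \esum_(i in P) f i.
Proof.
move=> r0 f0; rewrite /esum -ereal_sup_pZl //; congr ereal_sup.
apply/seteqP; split => _ [X HX <-].
  by exists (\sum_(i \in X) f i); [exists X|rewrite ge0_mule_fsumr].
by move: HX => [Y HY <-]; exists Y => //; rewrite ge0_mule_fsumr.
Qed.

End EsumFacts.

Lemma esum_image_le (R : realType) (T U : pointedType)
    (P : set T) (g : T -> U) (f : U -> \bar R) :
  (forall i, (0 <= f i)%E) ->
  (\esum_(j in g @` P) f j <= \esum_(i in P) f (g i))%E.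
Proof.
move=> f0; pose h y := get (fun x => P x /\ g x = y).
have hP y : (g @` P) y -> P (h y) /\ g (h y) = y.
  by case=> x Px <-; apply: (@xgetPex _ point (fun x0 => P x0 /\ g x0 = g x)); exists x.
have -> : g @` P = g @` (h @` (g @` P)).
  apply/seteqP; split => y.
    by move=> Py; exists (h y); [exists y|exact: (hP y Py).2].
  by move=> [_ [z Pz <-] <-]; rewrite (hP z Pz).2.
rewrite esum_image; last first.
  by move=> _ _ /set_mem[a Pa <-] /set_mem[b Pb <-]; rewrite (hP a Pa).2 (hP b Pb).2 => ->.
by apply: esum_subset => // _ [y Py <-]; exact: (hP y Py).1.
Qed.

Section SumOfSuprema.
Variables (R : realType) (T : eqType).
Local Open Scope ereal_scope.

Lemma ereal_supD_le (S : set (\bar R)) (t B : \bar R) : S 0 -> 0 <= t ->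
  (forall e, S e -> e \is a fin_num) ->
  (forall e, S e -> e + t <= B) -> ereal_sup S + t <= B.
Proof.
move=> S0 t0 Sfin StB; case: t t0 StB => [r| |] t0 StB; last by [].
  rewrite -leeBrDr //; apply: ge_ereal_sup => e Se; rewrite leeBrDr //; exact: StB.
by apply: le_trans (StB 0 S0); rewrite add0e leey.
Qed.

Lemma sum_ereal_sup_le (s : seq T) (S : T -> set (\bar R)) (B : \bar R) :
  uniq s -> (forall A, S A 0) -> (forall A e, S A e -> e \is a fin_num) ->
  (forall c : T -> \bar R, (forall A, A \in s -> S A (c A)) ->
     \sum_(A <- s) c A <= B) ->
  \sum_(A <- s) ereal_sup (S A) <= B.
Proof.
move=> + S0 Sfin; elim: s B => [|a s IH] B.
  by move=> _ /(_ (fun _ => 0) (fun A _ => S0 A)); rewrite !big_nil.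
rewrite cons_uniq => /andP[as_ us] sum_le; rewrite big_cons.
apply: ereal_supD_le => //; [|exact: Sfin|move=> e Se].
  by rewrite sume_ge0 // => A _; apply: ereal_sup_ubound. rewrite -(leeBrDl _ _ (Sfin _ _ Se)).
apply: IH => // c Sc; rewrite (leeBrDl _ _ (Sfin _ _ Se)).
pose c' A := if A == a then e else c A.
have := sum_le c'; rewrite big_cons /c' eqxx.
rewrite (eq_big_seq c); last by move=> A As; case: eqP => // EA; move: as_; rewrite -EA As.
by apply => A; rewrite in_cons; case: eqP => [->|_] //= /Sc.
Qed.

End SumOfSuprema.

Section BoolProductClusters.
Variable I : eqType.
Local Notation PT := (prod_topology (fun _ : I => bool)).

Lemma nbhs_agree (p : PT) (l : seq I) :
  nbhs p [set q : PT | forall c, c \in l -> q c = p c].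
Proof.
elim: l => [|c l IH]; first by apply: filterS filterT => q _ c.
have Hc : nbhs p [set q : PT | q c = p c].
  apply: (@proj_continuous I (fun _ => bool) c p [set p c]).
  by rewrite nbhs_principalE => y /= ->.
apply: filterS (filterI Hc IH) => q [qc ql] d.
by rewrite in_cons => /orP[/eqP->|/ql].
Qed.

Lemma cluster_seq (K : set PT) (s : nat -> PT) : compact K -> (forall n, K (s n)) ->
  exists2 p, K p & forall (l : seq I) N,
    exists n, (N <= n)%N /\ forall c, c \in l -> s n c = p c.
Proof.
move=> cK sK; have HK : (s @ \oo) K by exists 0%N => // n _; exact: sK.
have [p [Kp clp]] := cK (s @ \oo) _ HK.
exists p => // l N; have tail : (s @ \oo) (s @` [set n | (N <= n)%N]).
  by exists N => // n /= Nn; exists n.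
by have [_ [[n Nn <-] agree]] := clp _ _ tail (nbhs_agree p l); exists n.
Qed.

Lemma bool_product_compact : compact [set: PT].
Proof.
have := @tychonoff I (fun _ => bool) (fun _ => setT) (fun _ => bool_compact).
by congr (compact _); rewrite eqEsubset.
Qed.

End BoolProductClusters.

(* A compact family of subsets of nat contains every set that it
   approximates on every initial segment (compact sets are closed). *)
Lemma compact_fam_closed (F : set (set nat)) (S : set nat) : fam_compact F ->
  (forall m, exists B, F B /\ forall k, (k < m)%N -> (B k <-> S k)) -> F S.
Proof.
move=> Fcomp approx; have [B BP] := choice approx.
have FB m : (char_of @` F) (char_of (B m)) by exists (B m); [exact: (BP m).1|].
have [_ [C FC <-] agree] := cluster_seq Fcomp FB.
suff -> : S = C by [].
apply/seteqP; split => k; have [m [km /(_ k (mem_head _ _))]] := agree [:: k] k.+1;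
  rewrite /char_of => Bk /=; have := (BP m).2 k km.
- by move=> [_ SB] /SB Bmk; apply/asboolP; rewrite -Bk; exact/asboolP.
- by move=> [BSm _] Ck; apply/BSm/asboolP; rewrite Bk; exact/asboolP.
Qed.

Section BlockNorm.
Variable R : realType.
Local Open Scope ereal_scope.
Implicit Types (x y : nat -> R) (A B : set nat).

Lemma supabs_ge0 x A : 0 <= supabs x A.
Proof. by apply: ereal_sup_ubound; left. Qed.

Lemma supabs_ge x A k : A k -> (`|x k|)%:E <= supabs x A.
Proof. by move=> Ak; apply: ereal_sup_ubound; right; exists k. Qed.

Lemma supabs_le x A b : 0 <= b -> (forall k, A k -> (`|x k|)%:E <= b) ->
  supabs x A <= b.
Proof. by move=> b0 xb; apply: ge_ereal_sup => e [->|[k Ak <-]] //; exact: xb. Qed.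

Lemma supabs_mono x y A B : A `<=` B -> (forall k, A k -> `|x k| <= `|y k|)%R ->
  supabs x A <= supabs y B.
Proof.
move=> AB xy; apply: supabs_le; first exact: supabs_ge0.
by move=> k Ak; apply: le_trans (supabs_ge _ (AB _ Ak)); rewrite lee_fin; exact: xy.
Qed.

Lemma supabs_set0 x : supabs x set0 = 0.
Proof. by apply/eqP; rewrite eq_le supabs_ge0 andbT; apply: supabs_le. Qed.

Lemma supabs_set1 x k : supabs x [set k] = (`|x k|)%:E.
Proof. by apply/eqP; rewrite eq_le supabs_ge // andbT; apply: supabs_le => // j ->. Qed.

Lemma supabsZ x (l : R) A : (0 < `|l|)%R ->
  supabs (fun k => l * x k)%R A = (`|l|)%:E * supabs x A.
Proof.
move=> l0; rewrite /supabs -ereal_sup_pZl //; congr ereal_sup.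
apply/seteqP; split => e.
  move=> [->|[k Ak <-]]; first by exists 0 => //; [left|rewrite mule0].
  by exists (`|x k|)%:E; [right; exists k|rewrite -EFinM normrM].
move=> [_ [->|[k Ak <-]] <-]; first by left; rewrite mule0.
by right; exists k => //; rewrite -EFinM normrM.
Qed.

Lemma sum_supabs_le x (s : seq (set nat)) (b : \bar R) : uniq s ->
  (forall w : set nat -> nat, (forall A, A \in s -> A != set0 -> A (w A)) ->
     \sum_(A <- s | A != set0) (`|x (w A)|)%:E <= b) ->
  \sum_(A <- s) supabs x A <= b.
Proof.
move=> us choice_le; apply: sum_ereal_sup_le => // [A|A e [->|[k _ <-]]//|c sc].
  by left.
pose w A := get (fun k => A k /\ c A <= (`|x k|)%:E).
have cw A : A \in s -> A != set0 -> A (w A) /\ c A <= (`|x (w A)|)%:E.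
  move=> As /set0P[k0 Ak0]; apply: (@xgetPex _ 0%N (fun k => A k /\ c A <= _)).
  case: (sc A As) => [->|[k Ak <-]]; last by exists k.
  by exists k0; split; rewrite ?lee_fin.
have w_in A : A \in s -> A != set0 -> A (w A) by move=> As A0; exact: (cw A As A0).1.
apply: (le_trans _ (choice_le w w_in)).
rewrite [leRHS]big_mkcond /= big_seq [leRHS]big_seq; apply: lee_sum => A As.
case: ifPn => [A0|]; first exact: (cw A As A0).2.
rewrite negbK => /eqP A0; case: (sc A As) => [->|[k]] //.
by rewrite A0.
Qed.

End BlockNorm.

Section Blocks.
Implicit Types (P : set (set nat)) (A B : set nat).

Lemma block_of P k : is_partition P -> exists2 A, P A & A k.
Proof.
case=> _ cov _; have : (\bigcup_(A in P) A) k by rewrite cov.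
by case=> A PA Ak; exists A.
Qed.

Lemma block_uniq P A B k : is_partition P -> P A -> P B -> A k -> B k -> A = B.
Proof.
case=> _ _ dis PA PB Ak Bk; apply: contrapT => AB.
by have /seteqP[/(_ k (conj Ak Bk))] := dis _ _ PA PB AB.
Qed.

Lemma restricted_blocks_disj P A B V : is_partition P -> P A -> P B ->
  A `&` V <> B `&` V -> (A `&` V) `&` (B `&` V) = set0.
Proof.
case=> _ _ dis PA PB AB; have AB' : A <> B by move=> E; apply: AB; rewrite E.
by apply/seteqP; split => // k [[Ak _] [Bk _]]; rewrite -(dis _ _ PA PB AB'); split.
Qed.

(* The equivalence relation "i and j lie in a common block", as a point of
   the compact space of boolean functions on nat * nat. *)
Definition same_block P : nat * nat -> bool :=
  fun ij => `[< exists A, P A /\ A ij.1 /\ A ij.2 >].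

Lemma same_blockP P i j : reflect (exists A, P A /\ A i /\ A j) (same_block P (i, j)).
Proof. exact: asboolP. Qed.

Lemma same_blockE P A i j : is_partition P -> P A -> A i ->
  same_block P (i, j) <-> A j.
Proof.
move=> HP PA Ai; split => [/same_blockP[B [PB [Bi Bj]]]|Aj].
  by rewrite (block_uniq HP PA PB Ai Bi).
by apply/same_blockP; exists A.
Qed.

Definition separated P (ks : seq nat) : Prop :=
  forall i j, i \in ks -> j \in ks -> i != j -> ~~ same_block P (i, j).

End Blocks.

Definition cost (R : realType) (x : nat -> R) (P : set (set nat)) : \bar R :=
  (\esum_(A in P) supabs x A)%E.

Section Cost.
Variable R : realType.
Local Open Scope ereal_scope.
Implicit Types (x y : nat -> R) (P : set (set nat)).

Lemma cost_ge0 x P : 0 <= cost x P.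
Proof. by apply: esum_ge0 => A _; apply: supabs_ge0. Qed.

Lemma cost_mono x y P : (forall k, `|x k| <= `|y k|)%R -> cost x P <= cost y P.
Proof. by move=> xy; apply: le_esum => A _; apply: supabs_mono. Qed.

Lemma costZ x (l : R) P : (0 < `|l|)%R ->
  cost (fun k => l * x k)%R P = (`|l|)%:E * cost x P.
Proof.
move=> l0; rewrite /cost -esum_pZl //; last by move=> ?; apply: supabs_ge0.
by apply: eq_esum => A _; rewrite supabsZ.
Qed.

Lemma cost_ge_separated x P ks : is_partition P -> uniq ks -> separated P ks ->
  \sum_(k <- ks) (`|x k|)%:E <= cost x P.
Proof.
move=> HP uks sep; pose blk k := get (fun A => P A /\ A k).
have blkP k : P (blk k) /\ blk k k.
  by apply: (@xgetPex _ set0 (fun A => P A /\ A k)); have [A] := block_of k HP; exists A.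
have blk_inj : {in ks &, injective blk}.
  move=> i j iks jks eij; apply: contrapT => /eqP ij.
  move/negP: (sep _ _ iks jks ij); apply; apply/same_blockP; exists (blk i).
  by rewrite {3}eij; split; [exact: (blkP i).1|split; [exact: (blkP i).2|exact: (blkP j).2]].
apply: (@le_trans _ _ (\sum_(A <- map blk ks) supabs x A)).
  by rewrite big_map; apply: lee_sum => k _; apply: supabs_ge; exact: (blkP k).2.
rewrite fsbig_seq ?map_inj_in_uniq //; apply: esum_ge; exists [set` map blk ks] => //.
by split; [exact: finite_seq|move=> A /= /mapP[k _ ->]; exact: (blkP k).1].
Qed.

Lemma cost_le_separated x P (b : \bar R) : is_partition P ->
  (forall ks, uniq ks -> separated P ks -> \sum_(k <- ks) (`|x k|)%:E <= b) ->
  cost x P <= b.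
Proof.
move=> HP sum_le; apply: ge_ereal_sup => _ [X [finX XP] <-].
rewrite fsbig_finite //=; set s := finmap.enum_fset _.
have sP A : A \in s -> P A by move=> As; apply: XP; move: As; rewrite in_fset_set // inE.
apply: sum_supabs_le; first exact: finmap.fset_uniq.
move=> w ws; rewrite -big_filter -(big_map w xpredT (fun k => (`|x k|)%:E)).
set s' := [seq A <- s | A != set0].
have ws' A : A \in s' -> P A /\ A (w A).
  by rewrite mem_filter => /andP[A0 As]; split; [exact: sP|exact: ws].
have w_inj : {in s' &, injective w}.
  by move=> A B /ws'[PA Aw] /ws'[PB Bw] wAB; apply: block_uniq HP PA PB Aw _; rewrite wAB.
apply: sum_le; first by rewrite map_inj_in_uniq // filter_uniq // finmap.fset_uniq.
move=> _ _ /mapP[A As' ->] /mapP[B Bs' ->] wAB.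
apply/negP => /same_blockP[C [PC [CA CB]]]; move/negP: wAB; apply; apply/eqP.
have [PA Aw] := ws' _ As'; have [PB Bw] := ws' _ Bs'.
by rewrite (block_uniq HP PA PC Aw CA) (block_uniq HP PB PC Bw CB).
Qed.

End Cost.

Section FnormBasics.
Variables (R : realType) (F : set (set nat)).
Local Open Scope ereal_scope.
Implicit Types (x y : nat -> R).

Lemma Fnorm_le x P : partitions_in F P -> Fnorm F x <= cost x P.
Proof. by move=> FP; apply: ereal_inf_lbound; exists P. Qed.

Lemma Fnorm_ge x b : (forall P, partitions_in F P -> b <= cost x P) ->
  b <= Fnorm F x.
Proof. by move=> b_le; apply: le_ereal_inf_tmp => _ [P FP <-]; exact: b_le. Qed.

Lemma Fnorm_ge0 x : 0 <= Fnorm F x.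
Proof. by apply: Fnorm_ge => P _; apply: cost_ge0. Qed.

Lemma Fnorm_mono x y : (forall k, `|x k| <= `|y k|)%R -> Fnorm F x <= Fnorm F y.
Proof.
move=> xy; apply: Fnorm_ge => P FP; apply: le_trans (Fnorm_le _ FP) _.
exact: cost_mono.
Qed.

Lemma Fnorm_ge_coord x k : (`|x k|)%:E <= Fnorm F x.
Proof.
apply: Fnorm_ge => P [HP _]; have := @cost_ge_separated _ x P [:: k] HP isT.
by rewrite big_seq1; apply => i j; rewrite !inE => /eqP-> /eqP->; rewrite eqxx.
Qed.

End FnormBasics.

Section Singletons.
Variables (R : realType) (F : set (set nat)).
Hypotheses (Fher : fam_hereditary F) (Fcov : fam_covers F).
Local Open Scope ereal_scope.
Implicit Types (x : nat -> R).

Lemma F_set1 k : F [set k].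
Proof.
have : (\bigcup_(A in F) A) k by rewrite Fcov.
by case=> A FA Ak; apply: (Fher FA) => i ->.
Qed.

Lemma F_set0 : F set0.
Proof. exact: (Fher (F_set1 0)). Qed.

Definition singletons : set (set nat) := set0 |` [set [set k] | k in setT].

Lemma singletons_part : partitions_in F singletons.
Proof.
split; last by move=> A [->|[k _ <-]]; [exact: F_set0|exact: F_set1].
split; first by left.
  by apply/seteqP; split => // k _; exists [set k] => //; right; exists k.
move=> A B [->|[k _ <-]] [->|[j _ <-]] AB; rewrite ?set0I ?setI0 //.
by apply/seteqP; split => // i [/= -> ik]; apply: AB; rewrite ik.
Qed.

Lemma cost_singletons x : cost x singletons = \esum_(k in setT) (`|x k|)%:E.
Proof.
rewrite /cost /singletons esum_setU1_0 ?supabs_set0 // esum_image; last first.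
  by move=> a b _ _ /= ab; have : [set a] b by rewrite ab.
by apply: eq_esum => k _; rewrite supabs_set1.
Qed.

Lemma Fnorm_fin x : finitely_supported x -> Fnorm F x < +oo.
Proof.
move=> finx; apply: le_lt_trans (Fnorm_le _ singletons_part) _.
rewrite cost_singletons esum_mkcond.
have -> : \esum_(k in setT) (if k \in setT then (`|x k|)%:E else 0) =
    \esum_(k in [set k | x k != 0%R]) (`|x k|)%:E.
  rewrite [RHS]esum_mkcond; apply: eq_esum => k _; rewrite in_setT.
  by case: ifPn => // /negP; rewrite inE /= => /negP; rewrite negbK => /eqP ->; rewrite normr0.
by rewrite esum_fset // ?fsumEFin // ltry.
Qed.

Lemma Fnorm_0 : Fnorm F (fun _ => 0%R : R) = 0.
Proof.
apply/eqP; rewrite eq_le Fnorm_ge0 andbT.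
apply: le_trans (Fnorm_le _ singletons_part) _; rewrite /cost esum1 // => A _.
by apply/eqP; rewrite eq_le supabs_ge0 andbT; apply: supabs_le => // k _; rewrite normr0.
Qed.

Lemma Fnorm_eq0 x : Fnorm F x = 0 <-> x = (fun _ => 0%R : R).
Proof.
split => [x0|->]; last exact: Fnorm_0.
apply: funext => k; apply/eqP; rewrite -normr_eq0 eq_le normr_ge0 andbT.
by rewrite -lee_fin; apply: le_trans (Fnorm_ge_coord F x k) _; rewrite x0.
Qed.

Lemma Fnorm_hom (l : R) x : Fnorm F (fun k => l * x k)%R = (`|l|)%:E * Fnorm F x.
Proof.
have [->|l0] := eqVneq l 0%R.
  rewrite normr0 mul0e -Fnorm_0; congr Fnorm; apply: funext => k; exact: mul0r.
rewrite /Fnorm -ereal_inf_pZl ?normr_gt0 //; congr ereal_inf.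
apply/seteqP; split => [_ [P FP <-]|_ [_ [P FP <-] <-]].
  by exists (cost x P); [exists P|rewrite -costZ ?normr_gt0].
by exists P => //; rewrite -costZ ?normr_gt0.
Qed.

End Singletons.

(* Quasi-triangle inequality with constant 2: given partitions P, Q in F,
   split nat into U = {|y| <= |x|} and its complement and use P on U and Q on
   the complement; this is again a partition inside F since F is hereditary. *)
Section QuasiTriangle.
Variables (R : realType) (F : set (set nat)).
Hypotheses (Fher : fam_hereditary F) (Fcov : fam_covers F).
Local Open Scope ereal_scope.
Implicit Types (x y : nat -> R).

Lemma le_ereal_infD (S : set (\bar R)) c m : (forall a, S a -> 0 <= a) -> 0 <= c ->
  (forall a, S a -> m <= a + c) -> m <= ereal_inf S + c.
Proof.
move=> S0 c0 mS; have i0 : 0 <= ereal_inf S by apply: le_ereal_inf_tmp.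
case: c c0 mS => [r| |] c0 mS; last by [].
  by rewrite -leeBlDr //; apply: le_ereal_inf_tmp => a Sa; rewrite leeBlDr //; exact: mS.
by rewrite addey ?leey // gt_eqF // (lt_le_trans _ i0) // ltNy0.
Qed.

Lemma cost_mixed_le x y P Q : partitions_in F P -> partitions_in F Q ->
  Fnorm F (fun k => Num.max `|x k| `|y k|)%R <= cost x P + cost y Q.
Proof.
move=> [HP PF] [HQ QF]; set z := (fun k => Num.max `|x k| `|y k|)%R.
pose U := [set k | `|y k| <= `|x k|]%R.
pose M := (fun A => A `&` U) @` P `|` (fun A => A `&` ~` U) @` Q.
have FM : partitions_in F M.
  split; last by move=> _ [[A /PF FA <-]|[A /QF FA <-]]; apply: (Fher FA) => k [].
  split; first by left; exists set0; [case: HP|rewrite set0I].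
  - apply/seteqP; split => // k _; have [Uk|nUk] := pselect (U k).
      have [A PA Ak] := block_of k HP.
      by exists (A `&` U); [left; exists A|split].
    have [A QA Ak] := block_of k HQ.
    by exists (A `&` ~` U); [right; exists A|split].
  - move=> _ _ [[A PA <-]|[A QA <-]] [[B PB <-]|[B QB <-]] AB.
    + exact: restricted_blocks_disj HP PA PB AB.
    + by apply/seteqP; split => // k [[_ Uk] [_ nUk]].
    + by apply/seteqP; split => // k [[_ nUk] [_ Uk]].
    + exact: restricted_blocks_disj HQ QA QB AB.
apply: le_trans (Fnorm_le _ FM) _; rewrite /cost /M.
apply: le_trans (esum_setU_le _ _ (fun A => supabs_ge0 z A)) _.
have z_ge0 k : (0 <= z k)%R by rewrite le_max normr_ge0.
apply: leeD; apply: le_trans (esum_image_le _ _ (fun A => supabs_ge0 z A)) _;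
  apply: le_esum => A _; apply: supabs_mono => k [] // _ Uk; rewrite ger0_norm //.
  by rewrite ge_max lexx.
by rewrite ge_max lexx andbT ltW // ltNge; apply/negP.
Qed.

Lemma Fnorm_max x y :
  Fnorm F (fun k => Num.max `|x k| `|y k|)%R <= Fnorm F x + Fnorm F y.
Proof.
apply: le_ereal_infD; [by move=> _ [P _ <-]; apply: cost_ge0|exact: Fnorm_ge0|].
move=> _ [P FP <-]; rewrite addeC; apply: le_ereal_infD.
- by move=> _ [Q _ <-]; apply: cost_ge0.
- exact: cost_ge0.
by move=> _ [Q FQ <-]; rewrite addeC; exact: cost_mixed_le.
Qed.

Lemma Fnorm_quasi_triangle x y :
  Fnorm F (fun k => x k + y k)%R <= 2%:E * (Fnorm F x + Fnorm F y).
Proof.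
pose z := (fun k => Num.max `|x k| `|y k|)%R.
have z_ge0 k : (0 <= z k)%R by rewrite le_max normr_ge0.
apply: le_trans (@Fnorm_mono R F _ (fun k => 2 * z k)%R _) _.
  move=> k; apply: le_trans (ler_normD _ _) _.
  rewrite normrM ger0_norm // ger0_norm // mulr_natl mulr2n.
  by apply: lerD; rewrite le_max lexx ?orbT.
rewrite (Fnorm_hom Fher Fcov) ger0_norm //; apply: lee_wpmul2l => //; exact: Fnorm_max.
Qed.

End QuasiTriangle.

Section LimitPartition.
Variable Pn : nat -> set (set nat).
Hypothesis Pn_part : forall n, is_partition (Pn n).
Variable p : nat * nat -> bool.
Hypothesis p_cluster : forall (l : seq (nat * nat)) N,
  exists n, (N <= n)%N /\ forall c, c \in l -> same_block (Pn n) c = p c.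

Lemma limit_refl i : p (i, i).
Proof.
have [n [_ agree]] := p_cluster [:: (i, i)] 0.
rewrite -agree ?mem_head //; apply/same_blockP.
by have [A PA Ai] := block_of i (Pn_part n); exists A.
Qed.

Lemma limit_sym i j : p (i, j) -> p (j, i).
Proof.
have [n [_ agree]] := p_cluster [:: (i, j); (j, i)] 0.
rewrite -!agree; try by rewrite !inE eqxx ?orbT.
by move=> /same_blockP[A [PA [Ai Aj]]]; apply/same_blockP; exists A.
Qed.

Lemma limit_trans i j k : p (i, j) -> p (j, k) -> p (i, k).
Proof.
have [n [_ agree]] := p_cluster [:: (i, j); (j, k); (i, k)] 0.
rewrite -!agree; try by rewrite !inE eqxx ?orbT.
move=> /same_blockP[A [PA [Ai Aj]]] /same_blockP[B [PB [Bj Bk]]].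
apply/same_blockP; exists A; do 2?split => //.
by rewrite (block_uniq (Pn_part n) PA PB Aj Bj).
Qed.

Definition limit_class i : set nat := [set j | p (i, j)].

Lemma limit_class_eq i j : p (i, j) -> limit_class i = limit_class j.
Proof.
move=> pij; apply/seteqP; split => k /=; last exact: limit_trans.
by apply: limit_trans; exact: limit_sym.
Qed.

Definition limit_partition : set (set nat) := set0 |` [set limit_class i | i in setT].

Lemma limit_partition_part : is_partition limit_partition.
Proof.
split; first by left.
  apply/seteqP; split => // k _; exists (limit_class k); first by right; exists k.
  exact: limit_refl.
move=> A B [->|[i _ <-]] [->|[j _ <-]] AB; rewrite ?set0I ?setI0 //.
apply/seteqP; split => // k [/= pik pjk]; apply: AB.
by apply: limit_class_eq; apply: limit_trans pik (limit_sym pjk).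
Qed.

(* Each class is approximated on initial segments by blocks of the Pn. *)
Lemma limit_class_in (F : set (set nat)) i :
  fam_compact F -> (forall n, Pn n `<=` F) -> F (limit_class i).
Proof.
move=> Fcomp PnF; apply: compact_fam_closed Fcomp _ => m.
have [n [_ agree]] := p_cluster [seq (i, k) | k <- iota 0 m] 0.
have [A PA Ai] := block_of i (Pn_part n).
exists A; split; first exact: PnF PA.
move=> k km; rewrite /limit_class /= -agree; last by apply: map_f; rewrite mem_iota.
exact: iff_sym (@same_blockE _ _ i k (Pn_part n) PA Ai).
Qed.

Lemma separated_limit ks N : separated limit_partition ks ->
  exists n, (N <= n)%N /\ separated (Pn n) ks.
Proof.
move=> sep; have [n [Nn agree]] := p_cluster [seq (i, j) | i <- ks, j <- ks] N.
exists n; split => // i j iks jks ij; rewrite agree ?allpairs_f //.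
apply/negP => pij; move/negP: (sep i j iks jks ij); apply.
apply/same_blockP; exists (limit_class i); split; first by right; exists i.
by split; [exact: limit_refl|exact: pij].
Qed.

Lemma cost_limit_le (R : realType) (x : nat -> R) (b : \bar R) :
  (forall n, (cost (projn n x) (Pn n) <= b)%E) -> (cost x limit_partition <= b)%E.
Proof.
move=> cost_le; apply: cost_le_separated limit_partition_part _ => ks uks sep.
have [n [ksn sepn]] := separated_limit (\max_(k <- ks) k).+1 sep.
apply: le_trans (cost_le n); apply: le_trans (cost_ge_separated _ (Pn_part n) uks sepn).
rewrite big_seq [leRHS]big_seq; apply: lee_sum => k kks.
have kn : (k < n)%N by apply: leq_trans ksn; rewrite ltnS; exact: leq_bigmax_seq.
by rewrite /projn /projA asboolT.
Qed.

End LimitPartition.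

Section Truncations.
Variables (R : realType) (F : set (set nat)).
Hypotheses (Fcomp : fam_compact F) (Fher : fam_hereditary F) (Fcov : fam_covers F).
Local Open Scope ereal_scope.
Implicit Types (x : nat -> R).

Lemma projn_le n x k : (`|projn n x k| <= `|x k|)%R.
Proof. by rewrite /projn /projA; case: ifP; rewrite ?normr0. Qed.

Lemma projn_mono n m x k : (n <= m)%N -> (`|projn n x k| <= `|projn m x k|)%R.
Proof.
move=> nm; rewrite /projn /projA; case: asboolP => [kn|_]; last by rewrite normr0.
by rewrite asboolT //= (leq_trans kn).
Qed.

(* Near-optimal partitions for the truncations have a limit partition in F
   whose cost for x is at most the limit of the norms of the truncations. *)
Lemma Fnorm_lsc x :
  Fnorm F x <= ereal_sup (range (fun n => Fnorm F (projn n x))).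
Proof.
set L := ereal_sup _.
have L0 : 0 <= L.
  by apply: le_trans (Fnorm_ge0 F (projn 0 x)) _; apply: ereal_sup_ubound; exists 0%N.
case EL : L => [r| |]; [|by rewrite leey|by rewrite EL in L0].
apply/lee_addgt0Pr => e e0.
have near_opt n : exists P, partitions_in F P /\ cost (projn n x) P <= r%:E + e%:E.
  have : Fnorm F (projn n x) < r%:E + e%:E.
    apply: (@le_lt_trans _ _ r%:E); first by rewrite -EL; apply: ereal_sup_ubound; exists n.
    by rewrite -EFinD lte_fin ltrDl.
  by move=> /ereal_inf_lt[_ [P FP <-] /ltW]; exists P.
have [Pn PnP] := choice near_opt.
have Pn_part n : is_partition (Pn n) := (PnP n).1.1.
have [p _ p_cluster] :=
  @cluster_seq _ setT (fun n => same_block (Pn n)) (@bool_product_compact _) (fun _ => I).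
have FP : partitions_in F (limit_partition p).
  split; first exact: (limit_partition_part Pn_part p_cluster).
  move=> A [->|[i _ <-]]; first exact: F_set0.
  exact: (limit_class_in Pn_part p_cluster i Fcomp (fun n => (PnP n).1.2)).
apply: le_trans (Fnorm_le _ FP) _.
exact: (cost_limit_le Pn_part p_cluster (fun n => (PnP n).2)).
Qed.

Lemma Fnorm_cvg x : (fun n => Fnorm F (projn n x)) @ \oo --> Fnorm F x.
Proof.
have mono : {homo (fun n => Fnorm F (projn n x)) : n m / (n <= m)%N >-> n <= m}.
  by move=> n m nm; apply: Fnorm_mono => k; exact: projn_mono.
suff <- : ereal_sup (range (fun n => Fnorm F (projn n x))) = Fnorm F x.
  exact: ereal_nondecreasing_cvgn.
apply/eqP; rewrite eq_le Fnorm_lsc andbT; apply: ge_ereal_sup => _ [n _ <-].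
by apply: Fnorm_mono => k; exact: projn_le.
Qed.

End Truncations.

Theorem mainTheorem2 (R : realType) (F : set (set nat)) :
  fam_compact F -> fam_hereditary F -> fam_covers F ->
  quasi_norm (@Fnorm R F) /\ nice (@Fnorm R F) /\
  (forall x : nat -> R, (fun n => Fnorm F (projn n x)) @ \oo --> Fnorm F x).
Proof.
move=> Fcomp Fher Fcov; split; [|split; [split|]].
- split; [exact: Fnorm_eq0|exact: Fnorm_hom|].
  by exists 2%R; split; [rewrite ler1n|exact: Fnorm_quasi_triangle].
- exact: Fnorm_fin.
- exact: Fnorm_mono.
- exact: Fnorm_cvg.
- exact: Fnorm_cvg.
Qed.
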